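(* Let $\Sigma,T$ be finite. The guarded languages (over $(\Sigma,T)$) recognized by deterministic KAT automata over $(\Sigma,T)$ are precisely the deterministic regular guarded languages over $(\Sigma,T)$.
   Context: Atoms $\mathsf{At}_T=2^T$. Guarded strings over $(\Sigma,T)$ are words in $\mathsf{At}_T(\Sigma\mathsf{At}_T)^*$; a guarded language is a set of guarded strings; it is regular if it is a regular language over the finite alphabet $\mathsf{At}_T\cup\Sigma$. A guarded language $L$ is deterministic if for all distinct $w,w'\in L$: (i) $w$ is not a proper prefix of $w'$, (ii) the first position where $w,w'$ differ is an atom. A deterministic KAT automaton over $(\Sigma,T)$ is $A=(Q,\delta,\iota)$ with $Q$ finite, $\delta:Q\times\mathsf{At}_T\to\{\mathsf{accept},\mathsf{reject}\}+\Sigma\times Q$, $\iota:\mathsf{At}_T\to\{\mathsf{accept},\mathsf{reject}\}+\Sigma\times Q$. For $\gamma:\mathsf{At}_T\to\{\mathsf{accept},\mathsf{reject}\}+\Sigma\times Q$, $L_A(\gamma)$ is the smallest set such that $\gamma(\alpha)=\mathsf{accept}$ implies $\alpha\in L_A(\gamma)$, and $\gamma(\alpha)=(p,q)$ with $w\in L_A(\delta(q,-))$ implies $\alpha pw\in L_A(\gamma)$. The language recognized by $A$ is $L(A)=L_A(\iota)$. *)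

From mathcomp Require Import all_boot.
Set Implicit Arguments. Unset Strict Implicit. Unset Printing Implicit Defensive.

Section Guarded.
Variables (Sigma T : finType).

Definition atom := {set T}.
Definition letter := (atom + Sigma)%type.
Definition word := seq letter.
Definition language := word -> Prop.

Fixpoint guarded (w : word) : bool :=
  match w with
  | [:: inl _] => true
  | inl _ :: inr _ :: w' => guarded w'
  | _ => false
  end.

Definition guarded_language (L : language) : Prop :=
  forall w, L w -> guarded w.

Definition is_atom (x : letter) : bool := if x is inl _ then true else false.

Definition deterministic (L : language) : Prop :=
  forall w w', L w -> L w' -> w <> w' ->
    (~ exists v, w' = w ++ v) /\
    (forall u a b v v', w = u ++ a :: v -> w' = u ++ b :: v' -> a <> b ->
        is_atom a /\ is_atom b).

Record DFA : Type := { dstate : finType; dstart : dstate;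
                dfinal : pred dstate; dtrans : dstate -> letter -> dstate }.
Definition dfa_accepts (D : DFA) (w : word) : bool :=
  @dfinal D (foldl (@dtrans D) (@dstart D) w).
Definition regular (L : language) : Prop :=
  exists D : DFA, forall w, L w <-> dfa_accepts D w.

Inductive action (Q : Type) := Accept | Reject | Step of Sigma & Q.
Arguments Accept {Q}. Arguments Reject {Q}. Arguments Step {Q}.

Record KATAut := { kstate : finType;
                   kdelta : kstate -> atom -> action kstate;
                   kiota : atom -> action kstate }.

Inductive LA (A : KATAut) : (atom -> action (kstate A)) -> word -> Prop :=
  | LA_accept gamma (al : atom) :
      gamma al = Accept -> LA gamma [:: inl al]
  | LA_step gamma (al : atom) (p : Sigma) (q : kstate A) (w : word) :
      gamma al = Step p q -> LA (@kdelta A q) w ->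
      LA gamma (inl al :: inr p :: w).

Definition KAT_lang (A : KATAut) : language := LA (@kiota A).

End Guarded.

From mathcomp Require Import all_boot.
Set Implicit Arguments. Unset Strict Implicit. Unset Printing Implicit Defensive.

(* A deterministic KAT automaton is simulated by a DFA that reads an atom, asks the automaton
   whether to accept, reject or perform an action p, and in the last case checks that the next
   letter is p.  Its language is guarded and deterministic because, after any prefix in
   (At Sigma)^*, the automaton alone decides whether the string ends or which action follows.
   Conversely, given a DFA for a deterministic guarded language, let its states act on an atom
   al by accepting if the residual accepts al, and otherwise by performing the action p for
   which the residual by al p is nonempty (a decidable reachability question in the DFA).
   Determinism of the language is exactly what makes this p unique, so the choice is faithful. *)

Arguments Accept {Sigma Q}.
Arguments Reject {Sigma Q}.

Lemma seq_ind_pair (X : Type) (P : seq X -> Prop) :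
  P [::] -> (forall x, P [:: x]) -> (forall x y s, P s -> P [:: x, y & s]) ->
  forall s, P s.
Proof.
move=> P0 P1 P2 s; suff [] : P s /\ forall x, P (x :: s) by [].
elim: s => [|y s [Ps Pys]]; first by split.
by split=> // x; apply: P2.
Qed.

Section Languages.
Variables Sigma T : finType.
Implicit Types (L : language Sigma T) (w : word Sigma T).

Lemma deterministic_residual L u :
  deterministic L -> deterministic (fun w => L (u ++ w)).
Proof.
move=> detL w w' Lw Lw' neq_ww'.
have neq_uw : u ++ w <> u ++ w' by move/eqP; rewrite eqseq_cat // => /andP[_ /eqP].
have [no_prefix fork] := detL _ _ Lw Lw' neq_uw; split.
  by case=> v def_w'; apply: no_prefix; exists v; rewrite def_w' catA.
by move=> u0 a b v v' def_w def_w'; apply: (fork (u ++ u0));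
  rewrite -catA ?def_w ?def_w'.
Qed.

End Languages.

Section KATSemantics.
Variables (Sigma T : finType) (A : KATAut Sigma T).
Local Notation Q := (kstate A).
Implicit Types (g : atom T -> action Sigma Q) (w : word Sigma T).

Fixpoint kat_accepts g w : bool :=
  match w with
  | [:: inl al] => if g al is Accept then true else false
  | inl al :: inr p :: w' =>
      if g al is Step p' q then (p' == p) && kat_accepts (kdelta q) w' else false
  | _ => false
  end.

Lemma kat_acceptsP g w : reflect (LA g w) (kat_accepts g w).
Proof.
apply: (iffP idP); last first.
  by elim=> [{}g al /= -> | {}g al p q {}w /= -> _ IH] //; rewrite eqxx.
elim/seq_ind_pair: w g => [|[al|p]|[al|p] [al'|p'] w IH] g //=.
  by case E: (g al) => // _; apply: LA_accept.
by case E: (g al) => [| |p q] // /andP[/eqP <- /IH]; apply: LA_step.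
Qed.

Lemma kat_accepts_guarded g w : kat_accepts g w -> guarded w.
Proof.
elim/seq_ind_pair: w g => [|[al|p]|[al|p] [al'|p'] w IH] g //=.
by case: (g al) => // p q /andP[_ /IH].
Qed.

Lemma kat_accepts_prefix g w v : kat_accepts g w -> kat_accepts g (w ++ v) -> v = [::].
Proof.
elim/seq_ind_pair: w g => [|[al|p]|[al|p] [al'|p'] w IH] g //=.
  by case: v => // -[] // p v; case: (g al).
by case: (g al) => [| |p0 q] // /andP[_ /IH acc_w] /andP[_ /acc_w].
Qed.

Lemma kat_accepts_fork g u a b v v' :
  kat_accepts g (u ++ a :: v) -> kat_accepts g (u ++ b :: v') -> a <> b ->
  is_atom a /\ is_atom b.
Proof.
elim/seq_ind_pair: u g => [|[al|p]|[al|p] [al'|p'] u IH] g //=.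
- by case: a b => [?|?] [?|?].
- case: a b => [?|pa] [?|pb] //; case: (g al) => [| |p q] //.
  by move=> /andP[/eqP <- _] /andP[/eqP <- _] /(_ erefl).
- by case: (g al) => [| |p q] // /andP[_ /IH acc_a] /andP[_ /acc_a].
Qed.

Lemma kat_accepts_deterministic g : deterministic (kat_accepts g).
Proof.
move=> w w' acc_w acc_w' neq_ww'; split.
  case=> v def_w'; apply: neq_ww'; rewrite def_w'.
  suff -> : v = [::] by rewrite cats0.
  by apply: (kat_accepts_prefix acc_w); rewrite -def_w'.
move=> u a b v v' def_w def_w'.
by move: acc_w acc_w'; rewrite def_w def_w'; apply: kat_accepts_fork.
Qed.

(* [inl (inl o)]: an atom is expected and is read by [kat_gamma o];
   [inl (inr (p, q))]: the action [p] is expected, after which the automaton is in state [q];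
   [inr b]: the guarded string is over, accepted iff [b]. *)
Definition kat_dfa_state : finType := (option Q + Sigma * Q + bool)%type.

Definition kat_gamma (o : option Q) : atom T -> action Sigma Q :=
  if o is Some q then kdelta q else kiota A.

Definition kat_dfa_trans (s : kat_dfa_state) (x : letter Sigma T) : kat_dfa_state :=
  match s, x with
  | inl (inl o), inl al =>
      match kat_gamma o al with
      | Accept => inr true
      | Reject => inr false
      | Step p q => inl (inr (p, q))
      end
  | inl (inr (p, q)), inr p' => if p' == p then inl (inl (Some q)) else inr false
  | _, _ => inr false
  end.

Definition kat_to_dfa : DFA Sigma T :=
  Build_DFA (inl (inl None) : kat_dfa_state) (pred1 (inr true)) kat_dfa_trans.

Lemma kat_dfa_trans_sink w : foldl kat_dfa_trans (inr false) w = inr false.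
Proof. by elim: w. Qed.

Lemma kat_dfa_trans_run o w :
  (foldl kat_dfa_trans (inl (inl o)) w == inr true) = kat_accepts (kat_gamma o) w.
Proof.
elim/seq_ind_pair: w o => [|[al|p]|[al|p] x w IH] o //=; first by case: (kat_gamma o al).
  case: (kat_gamma o al) x => [| |p' q] [al'|p]; rewrite /= ?kat_dfa_trans_sink //.
  by have [_|_] := eqVneq p' p; rewrite /= ?IH ?kat_dfa_trans_sink.
by rewrite kat_dfa_trans_sink.
Qed.

Lemma kat_to_dfa_accepts w : dfa_accepts kat_to_dfa w = kat_accepts (kiota A) w.
Proof. exact: kat_dfa_trans_run None w. Qed.

End KATSemantics.

Section DFAtoKAT.
Variables (Sigma T : finType) (D : DFA Sigma T).
Local Notation S := (dstate D).
Implicit Types (s : S) (w : word Sigma T).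

Definition dfa_lang s : language Sigma T := fun w => dfinal (foldl (@dtrans _ _ D) s w).

Definition dfa_step : rel S := fun s s' => [exists x, dtrans s x == s'].

Definition live s : bool := [exists s', connect dfa_step s s' && dfinal s'].

Lemma dfa_reachP s s' :
  reflect (exists w, foldl (@dtrans _ _ D) s w = s') (connect dfa_step s s').
Proof.
apply: (iffP connectP) => [[path_s path_ok ->] | [w <-]].
  elim: path_s s path_ok => [|s1 path_s IH] s /=; first by exists [::].
  by case/andP=> /existsP[x /eqP <-] /IH[w <-]; exists (x :: w).
elim: w s => [|x w IH] s /=; first by exists [::].
have [path_s path_ok ->] := IH (dtrans s x).
exists (dtrans s x :: path_s) => //=.
by rewrite path_ok andbT; apply/existsP; exists x.
Qed.

Lemma liveP s : reflect (exists w, dfa_lang s w) (live s).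
Proof.
apply: (iffP existsP) => [[s' /andP[/dfa_reachP[w <-] fin]] | [w acc]].
  by exists w.
by exists (foldl (@dtrans _ _ D) s w); rewrite acc andbT; apply/dfa_reachP; exists w.
Qed.

Definition dfa_kat_delta s (al : atom T) : action Sigma S :=
  let s_al := dtrans s (inl al) in
  if dfinal s_al then Accept
  else if [pick p | live (dtrans s_al (inr p))] is Some p
  then Step p (dtrans s_al (inr p)) else Reject.

Definition dfa_to_kat : KATAut Sigma T :=
  Build_KATAut dfa_kat_delta (dfa_kat_delta (dstart D)).
Local Notation kat_accepts := (@kat_accepts Sigma T dfa_to_kat).

Lemma dfa_to_kat_sound s w : kat_accepts (dfa_kat_delta s) w -> dfa_lang s w.
Proof.
elim/seq_ind_pair: w s => [|[al|p]|[al|p] [al'|p'] w IH] s //=; rewrite /dfa_kat_delta.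
  by case: ifP => // _; case: pickP.
case: ifP => // _; case: pickP => // p _ /andP[/eqP <-].
exact: IH.
Qed.

Lemma dfa_to_kat_complete (L : language Sigma T) s :
  guarded_language L -> deterministic L -> (forall w, L w <-> dfa_lang s w) ->
  forall w, L w -> kat_accepts (dfa_kat_delta s) w.
Proof.
move=> gL detL Ls w.
elim/seq_ind_pair: w L s gL detL Ls => [|x|x y w IH] L s gL detL Ls Lw.
- by have := gL _ Lw.
- case: x Lw => [al|p] Lw; last by have := gL _ Lw.
  by rewrite /= /dfa_kat_delta; have /Ls -> := Lw.
case: x y Lw => [al|?] [?|p] Lw; try by have := gL _ Lw.
have s_al_rej : ~~ dfinal (dtrans s (inl al)).
  apply/negP=> /(Ls [:: inl al]) Lal.
  have neq_w : [:: inl al] <> [:: inl al, inr p & w] by [].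
  have [not_prefix _] := detL _ _ Lal Lw neq_w.
  by apply: not_prefix; exists (inr p :: w).
have pick_p : [pick p' | live (dtrans (dtrans s (inl al)) (inr p'))] = Some p.
  case: pickP => [p' /liveP[w' acc_w'] | /(_ p)/liveP[]]; last first.
    by exists w; apply/(Ls (_ :: _ :: w)).
  have Lw' : L (inl al :: inr p' :: w') by apply/Ls.
  case: (eqVneq p' p) => [-> // | neq].
  have neq_p : inr p' <> inr p :> letter Sigma T by move=> [/eqP]; rewrite (negbTE neq).
  have neq_w : [:: inl al, inr p' & w'] <> [:: inl al, inr p & w].
    by move=> [/eqP]; rewrite (negbTE neq).
  have [_ fork] := detL _ _ Lw' Lw neq_w.
  by have [] := fork [:: inl al] _ _ w' w erefl erefl neq_p.
rewrite /= /dfa_kat_delta (negbTE s_al_rej) pick_p eqxx /=.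
apply: (IH (fun w' => L (inl al :: inr p :: w'))) => // [w' /gL // | ].
exact: (deterministic_residual (u := [:: inl al; inr p]) detL).
Qed.

End DFAtoKAT.

Theorem proposition4p12 (Sigma T : finType) (L : language Sigma T) :
  (exists A : KATAut Sigma T, forall w, L w <-> KAT_lang A w) <->
  [/\ guarded_language L, deterministic L & regular L].
Proof.
split.
  case=> A LA_L.
  have L_kat w : L w <-> kat_accepts (kiota A) w
    by split=> [/LA_L/kat_acceptsP | /kat_acceptsP/LA_L].
  split.
  - by move=> w /L_kat /kat_accepts_guarded.
  - by move=> w w' /L_kat Lw /L_kat Lw'; apply: (kat_accepts_deterministic Lw Lw').
  - by exists (kat_to_dfa A) => w; rewrite kat_to_dfa_accepts; apply: L_kat.
case=> gL detL [D L_D]; exists (dfa_to_kat D) => w.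
split=> [/(dfa_to_kat_complete gL detL L_D) /kat_acceptsP // |].
by move=> /kat_acceptsP /dfa_to_kat_sound /L_D.
Qed.
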